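(* Let $\Lambda\ge1$ and consider any connectivity of $K$ users to $\Lambda$ caches, any demand vector in which the $K$ users request pairwise distinct files, and the associated side information graph $G$. Let $\bm c=(c_1,\dots,c_\Lambda)$ be any permutation of $[\Lambda]$. Let $\mathcal J$ be the set of vertices consisting of: (i) all vertices $W_{d_u,\mathcal T}$, $\mathcal T\subseteq[\Lambda]$, for every user $u$ with $\mathcal U_u=\emptyset$; and (ii) for every user $u$ with $\mathcal U_u\neq\emptyset$, letting $i$ be the unique index such that $c_i\in\mathcal U_u\subseteq\{c_1,\dots,c_i\}$, all vertices $W_{d_u,\mathcal T}$ with $\mathcal T\subseteq[\Lambda]\setminus\{c_1,\dots,c_i\}$. Then the subgraph of $G$ induced by $\mathcal J$ contains no directed cycle.
   Context: Setting: $N$ files $W_1,\dots,W_N$, each partitioned into disjoint subfiles $W_{n,\mathcal T}$ indexed by $\mathcal T\subseteq[\Lambda]$, where $W_{n,\mathcal T}$ is the part stored exactly by the caches in $\mathcal T$. Each user $u$ is connected to the set of caches $\mathcal U_u\subseteq[\Lambda]$ (possibly empty) and requests file $W_{d_u}$, with the $d_u$ pairwise distinct. The side information set of user $u$ is $\{W_{n,\mathcal T}: n\in[N],\ \mathcal T\cap\mathcal U_u\neq\emptyset\}$ and its desired set is $\{W_{d_u,\mathcal T}:\mathcal T\subseteq[\Lambda]\setminus\mathcal U_u\}$. The side information graph $G$ is the directed graph whose vertices are all desired subfiles $W_{d_u,\mathcal T}$ ($u$ a user, $\mathcal T\subseteq[\Lambda]\setminus\mathcal U_u$), with a directed edge from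 a vertex desired by user $p$ to a vertex desired by user $q\ne p$ if and only if the former subfile belongs to the side information set of $q$. *)

From mathcomp Require Import all_boot perm.
Set Implicit Arguments. Unset Strict Implicit. Unset Printing Implicit Defensive.

(* Caches are 'I_Lam (cache c <-> paper's cache c+1), users 'I_K, files 'I_N.
   U u : {set 'I_Lam} is the set of caches user u is connected to;
   d u : 'I_N is the file requested by user u.
   A subfile W_{n,T} is represented by the pair (n, T). *)
Definition subfile (N Lam : nat) := ('I_N * {set 'I_Lam})%type.

Section SIG.
Variables (N K Lam : nat) (U : 'I_K -> {set 'I_Lam}) (d : 'I_K -> 'I_N).

Definition in_side_info (v : subfile N Lam) (u : 'I_K) : bool :=
  v.2 :&: U u != set0.

Definition desired_by (v : subfile N Lam) (u : 'I_K) : bool :=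
  (v.1 == d u) && (v.2 \subset ~: U u).

Definition sig_vertex (v : subfile N Lam) : bool := [exists u, desired_by v u].

Definition sig_edge : rel (subfile N Lam) := fun v w =>
  [exists p, exists q, [&& p != q, desired_by v p, desired_by w q &
                           in_side_info v q]].

(* {c_1, ..., c_i} for the 0-based index i *)
Definition cprefix (c : {perm 'I_Lam}) (i : 'I_Lam) : {set 'I_Lam} :=
  [set c j | j in [set j : 'I_Lam | j <= i]].

Definition inJ (c : {perm 'I_Lam}) (v : subfile N Lam) : bool :=
  [exists u, (v.1 == d u) &&
     (if U u == set0 then true
      else [exists i, [&& c i \in U u, U u \subset cprefix c i &
                          v.2 \subset ~: cprefix c i]])].

Definition has_directed_cycle (A : pred (subfile N Lam)) : Prop :=
  exists s : seq (subfile N Lam),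
    [/\ s != [::], all A s, all sig_vertex s & path.cycle sig_edge s].
End SIG.

From mathcomp Require Import all_boot perm.
Set Implicit Arguments. Unset Strict Implicit. Unset Printing Implicit Defensive.

(* Rank the vertices W_{n,T} by one plus the largest position in c of a cache
   connected to the (unique) user requesting file n.  If W_{n,T} is in J and
   meets the caches of user q, it contains some c_k with k beyond every
   position of the requester's caches, while any vertex desired by q has rank
   above k.  Hence every edge leaving J strictly increases the rank, and no
   cycle can stay inside J. *)

Lemma cycle_ltn_potential (T : eqType) (f : T -> nat) (s : seq T) :
  cycle (relpre f ltn) s -> s = [::].
Proof.
case: s => [//|x s] /=.
have ltn_f_trans : transitive (relpre f ltn) by move=> y z t; apply: ltn_trans.
move/(order_path_min ltn_f_trans)/allP/(_ x).
by rewrite mem_rcons mem_head /= ltnn => /(_ isT).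
Qed.

Section DemandRank.
Variables (N K Lam : nat) (U : 'I_K -> {set 'I_Lam}) (d : 'I_K -> 'I_N)
  (c : {perm 'I_Lam}).

Definition demand_rank (v : subfile N Lam) : nat :=
  \max_(u | v.1 == d u) \max_(k | c k \in U u) k.+1.

Lemma mem_cprefix k i : (c k \in cprefix c i) = (k <= i).
Proof. by rewrite /cprefix mem_imset ?inE //; apply: perm_inj. Qed.

Lemma demand_rank_gt v q k : v.1 == d q -> c k \in U q -> k < demand_rank v.
Proof.
move=> vq ckU; apply: leq_trans (leq_bigmax_cond q vq).
exact: (leq_bigmax_cond k ckU).
Qed.

Hypothesis d_inj : injective d.

Lemma demand_rank_inJ v k : inJ U d c v -> c k \in v.2 -> demand_rank v <= k.
Proof.
move=> /existsP[p /andP[/eqP vp Jp]] ckv.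
apply/bigmax_leqP => u /eqP vu; have -> : u = p by apply: d_inj; rewrite -vu.
apply/bigmax_leqP => k' ck'U; move: Jp; case: eqP => [U0 _ | _].
  by rewrite U0 inE in ck'U.
move=> /existsP[i /and3P[_ /subsetP Usub /subsetP vsub]].
have k'i : k' <= i by rewrite -mem_cprefix Usub.
have ik : i < k by move: (vsub _ ckv); rewrite inE mem_cprefix ltnNge.
exact: leq_ltn_trans k'i ik.
Qed.

Lemma demand_rank_edge v w :
  inJ U d c v -> sig_edge U d v w -> demand_rank v < demand_rank w.
Proof.
move=> Jv /existsP[p /existsP[q /and4P[_ _ /andP[wq _] vq]]].
have [v0 | [x]] := set_0Vmem (v.2 :&: U q).
  by rewrite /in_side_info v0 eqxx in vq.
rewrite inE -(permKV c x) => /andP[ckv ckU].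
exact: leq_ltn_trans (demand_rank_inJ Jv ckv) (demand_rank_gt wq ckU).
Qed.

End DemandRank.

Theorem lemma2 (N K Lam : nat) (U : 'I_K -> {set 'I_Lam}) (d : 'I_K -> 'I_N)
  (c : {perm 'I_Lam}) :
  0 < Lam -> injective d ->
  ~ has_directed_cycle U d (inJ U d c).
Proof.
move=> _ d_inj [s [s_nil sJ _ s_cycle]].
suff /cycle_ltn_potential s0 : cycle (relpre (demand_rank U d c) ltn) s.
  by rewrite s0 in s_nil.
apply: (sub_in_cycle _ sJ s_cycle) => v w vJ _.
exact: demand_rank_edge.
Qed.
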